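(* Let $q$ be a prime power, let $m, c, h, M$ be positive integers with $c < \frac{m-1}{m}M$, and let $r : \mathbb{F}_q \to \mathbb{F}_q$ be a function. Suppose $F_1(X), \ldots, F_m(X) \in \mathbb{F}_q[X]$ satisfy $\deg(F_i) < cq$ and are all $r$-twisted $(h,M)$-pseudopolynomials. Let $k$ be an integer with $$k > \frac{M}{(m-1)M - mc}\cdot (h+1).$$ Then there exist $k$-pseudopolynomials $A_1(X), \ldots, A_m(X) \in \mathbb{F}_q[X]$ with $\deg(A_i) < Mq$, not all zero, such that $$\sum_{i=1}^m A_i(X) F_i(X) = 0.$$
   Context: For $A(X) \in \mathbb{F}_q[X]$, $A^{[\ell]}(X)$ is the $\ell$-th Hasse derivative (the coefficient of $Z^\ell$ in $A(X+Z)$ expanded in powers of $Z$). With $\Lambda(X) = X^q - X$, the $\ell$-th pseudoderivative is $A_{\langle \ell \rangle}(X) = A^{[\ell]}(X) \bmod \Lambda(X)$. The pseudodegree is $\mathsf{pdeg}(A) = \max_{\ell \geq 0}\deg(A_{\langle\ell\rangle})$, and $A$ is a $k$-pseudopolynomial if $\mathsf{pdeg}(A) \leq k$. Given $r : \mathbb{F}_q \to \mathbb{F}_q$, a polynomial $F(X)$ is an $r$-twisted $(h,M)$-pseudopolynomial if for every $\ell$ with $0 \leq \ell < M$ there is $U_\ell(X) \in \mathbb{F}_q[X]$ of degree at most $h$ with $F^{[\ell]}(\alpha) = r(\alpha)\cdot U_\ell(\alpha)$ for all $\alpha \in \mathbb{F}_q$. *)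

From HB Require Import structures.
From mathcomp Require Import all_boot all_order all_algebra all_field.
Set Implicit Arguments. Unset Strict Implicit. Unset Printing Implicit Defensive.
Import Order.TTheory GRing.Theory Num.Theory.
Local Open Scope ring_scope.

(* F is a finite field; q = #|F| is a prime power automatically. *)

(* l-th Hasse derivative: coefficient of Z^l in A(X+Z) = \sum_i 'C(l+i,l) a_{l+i} X^i *)
Definition hasse (F : finFieldType) (l : nat) (A : {poly F}) : {poly F} :=
  nderivn l A.

Definition Lam (F : finFieldType) : {poly F} := 'X^#|F| - 'X.

Definition pseudoderiv (F : finFieldType) (l : nat) (A : {poly F}) : {poly F} :=
  hasse l A %% Lam F.

(* A is a k-pseudopolynomial: pdeg(A) = max_l deg(A_<l>) <= k
   (deg 0 = -oo, i.e. size <= k+1 expresses deg <= k). *)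
Definition is_pseudopoly (F : finFieldType) (k : nat) (A : {poly F}) : Prop :=
  forall l : nat, (size (pseudoderiv l A) <= k.+1)%N.

Definition twisted_pseudopoly (F : finFieldType) (r : F -> F) (h M : nat)
    (P : {poly F}) : Prop :=
  forall l : nat, (l < M)%N ->
    exists U : {poly F}, (size U <= h.+1)%N /\
      forall a : F, (hasse l P).[a] = r a * U.[a].

From HB Require Import structures.
From mathcomp Require Import all_boot all_order all_algebra all_field.
From mathcomp Require Import pgroup abelian.
From mathcomp Require Import ring zify.
Import Order.TTheory GRing.Theory Num.Theory.
Local Open Scope ring_scope.
Set Implicit Arguments.
Unset Strict Implicit.
Unset Printing Implicit Defensive.

(* Look for the A_i in Lam-adic form A_i = \sum_(j < M - c) Lam^j B_ij with
   deg B_ij < min(k + 1, q), where Lam = X^q - X.  Since Lam(X + Z) = Lam(X) +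
   Lam(Z), every pseudoderivative of Lam^j X^e has degree at most e, so the A_i
   are k-pseudopolynomials; and Lam-adic expansions are unique, so the A_i are
   not all zero unless all the B_ij are.  If F_i^[l] = r U_il on F_q, the
   Leibniz rule shows that the l-th Hasse derivative of G = \sum_i A_i F_i
   equals r V_l on F_q, where V_l = \sum_i \sum_(j <= l) A_i<j> U_i(l-j) has
   degree at most k + h.  Asking V_l = 0 mod Lam for all l < M imposes
   M min(k + h + 1, q) linear conditions on m (M - c) min(k + 1, q) unknowns;
   the bound on k makes the unknowns outnumber the conditions, so a nonzero
   solution exists.  Then the first M Hasse derivatives of G vanish on F_q,
   hence Lam^M divides G, and deg G < M q forces G = 0. *)

Section HasseSeries.
Variable R : comNzRingType.
Implicit Types A B : {poly R}.

Definition hasse_series A : {poly {poly R}} := \poly_(l < size A) nderivn l A.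

Lemma coef_hasse_series A l : (hasse_series A)`_l = nderivn l A.
Proof. by rewrite coef_poly; case: ltnP => // /nderivn_poly0. Qed.

Lemma hasse_seriesE A : hasse_series A = (A^:P^:P).['X%:P + 'X].
Proof.
rewrite nderiv_taylor; last exact: mulrC.
rewrite /hasse_series poly_def !size_map_polyC; apply: eq_bigr => i _.
by rewrite !nderivn_map horner_map /= -mul_polyC [_^:P.['X]]comp_polyXr.
Qed.

Lemma hasse_seriesM A B :
  hasse_series (A * B) = hasse_series A * hasse_series B.
Proof. by rewrite !hasse_seriesE !rmorphM /= hornerM. Qed.

Lemma hasse_seriesX A n : hasse_series (A ^+ n) = hasse_series A ^+ n.
Proof. by rewrite !hasse_seriesE !rmorphXn /= horner_exp. Qed.

Lemma hasse_seriesXn n : hasse_series 'X^n = ('X%:P + 'X) ^+ n.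
Proof. by rewrite hasse_seriesE !map_polyXn hornerXn. Qed.

Lemma nderivnM A B l :
  nderivn l (A * B) = \sum_(j < l.+1) nderivn j A * nderivn (l - j) B.
Proof.
rewrite -coef_hasse_series hasse_seriesM coefM.
by apply: eq_bigr => j _; rewrite !coef_hasse_series.
Qed.

End HasseSeries.

Lemma XsubC_exp_dvdp (R : idomainType) (G : {poly R}) M a :
  (forall l, (l < M)%N -> (nderivn l G).[a] = 0) -> ('X - a%:P) ^+ M %| G.
Proof.
move=> vanish.
(* Taylor expansion of G at a. *)
have -> : G = (G^:P).[a%:P + ('X - a%:P)].
  by rewrite addrC subrK [_.['X]]comp_polyXr.
rewrite nderiv_taylor; last exact: mulrC.
apply: (big_ind (fun p => _ %| p)) => [|p p'|i _]; first exact: dvdp0.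
  exact: dvdp_add.
rewrite nderivn_map horner_map /=.
have [lt_iM | le_Mi] := ltnP i M; first by rewrite vanish // mul0r dvdp0.
by rewrite dvdp_mull // dvdp_exp2l.
Qed.

Lemma prod_XsubC_exp_dvdp (R : idomainType) (G : {poly R}) M (s : seq R) :
  uniq s -> {in s, forall a, ('X - a%:P) ^+ M %| G} ->
  \prod_(a <- s) ('X - a%:P) ^+ M %| G.
Proof.
elim: s => [|b s IHs] /=; first by rewrite big_nil dvd1p.
case/andP=> b_s uniq_s dvdG; rewrite big_cons Gauss_dvdp ?dvdG ?mem_head //.
  by rewrite IHs // => a a_s; rewrite dvdG // inE a_s orbT.
apply: coprimep_expl; rewrite coprimep_sym coprimep_XsubC rootE horner_prod.
rewrite prodf_seq_neq0; apply/allP=> a a_s /=.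
rewrite horner_exp hornerXsubC expf_neq0 // subr_eq0.
by apply: contraNneq b_s => ->.
Qed.

Lemma size_sum_leq (R : nzSemiRingType) (I : Type) (r : seq I) (P : pred I)
    (E : I -> {poly R}) n :
  (forall i, P i -> (size (E i) <= n)%N) ->
  (size (\sum_(i <- r | P i) E i)%R <= n)%N.
Proof.
move=> sizeE; apply: (big_ind (fun p : {poly R} => size p <= n)%N) => //.
  by rewrite size_poly0.
move=> p p' sp sp'; apply: leq_trans (size_polyD _ _) _.
by rewrite geq_max sp sp'.
Qed.

Lemma radix_expansion_eq0 (R : idomainType) (d : {poly R}) J
    (B : 'I_J -> {poly R}) :
  (forall j, size (B j) < size d)%N -> \sum_(j < J) d ^+ j * B j = 0 ->
  forall j, B j = 0.
Proof.
elim: J B => [|J IHJ] B sizeB; first by move=> _ [].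
rewrite big_ord_recl expr0 mul1r.
under eq_bigr => j _ do rewrite exprS -mulrA.
rewrite -mulr_sumr => /eqP; rewrite addr_eq0 => /eqP B0E.
have B0 : B ord0 = 0.
  apply/eqP; apply: contraLR (sizeB ord0) => nzB0.
  by rewrite -leqNgt dvdp_leq // B0E dvdpNr dvdp_mulr.
have nz_d : d != 0 by rewrite -size_poly_gt0 (leq_ltn_trans _ (sizeB ord0)).
move: B0E; rewrite B0 => /esym/eqP; rewrite oppr_eq0 mulf_eq0 (negPf nz_d) /=.
move=> /eqP /IHJ B_lift j.
by case: (unliftP ord0 j) => [j' ->|-> //]; apply: B_lift.
Qed.

Lemma nontrivial_kernel_ffun (R : finZmodType) (I J : finType)
    (f : {ffun I -> R} -> {ffun J -> R}) :
  {morph f : u v / u - v} -> (1 < #|R|)%N -> (#|J| < #|I|)%N ->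
  exists2 u, u != 0 & f u = 0.
Proof.
move=> fB R_gt1 JI.
pose in_ker u := (u != 0) && (f u == 0).
have [u /andP[nz_u /eqP fu0] | no_u] := pickP in_ker; first by exists u.
have f_inj : injective f.
  move=> u v fuv; apply/eqP; rewrite -subr_eq0.
  by have := no_u (u - v); rewrite /in_ker fB fuv subrr eqxx andbT => /negbFE.
have := leq_card f f_inj; rewrite !card_ffun leqNgt.
by rewrite ltn_exp2l // JI.
Qed.

Lemma nat_bounds_of_rat (m c h M k : nat) : (0 < m)%N ->
  (c%:R : rat) < (m - 1)%:R / m%:R * M%:R ->
  (k%:R : rat) > M%:R / ((m - 1)%:R * M%:R - m%:R * c%:R) * (h + 1)%:R ->
  (m * c < (m - 1) * M)%N /\ (M * (h + 1) < k * ((m - 1) * M - m * c))%N.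
Proof.
move=> m_gt0 hc hk.
have lt_mc : (m * c < (m - 1) * M)%N.
  by move: hc; rewrite mulrAC ltr_pdivlMr ?ltr0n // mulrC -!natrM ltr_nat.
split=> //; move: hk; rewrite mulrAC ltr_pdivrMr; last first.
  by rewrite subr_gt0 -!natrM ltr_nat.
by rewrite -!natrM -(natrB _ (ltnW lt_mc)) -natrM ltr_nat.
Qed.

Lemma unknowns_gt_constraints (m c h M k q : nat) : (1 < q)%N ->
  (m * c < (m - 1) * M)%N -> (M * (h + 1) < k * ((m - 1) * M - m * c))%N ->
  (M * minn (k + h).+1 q < m * (M - c) * minn k.+1 q)%N.
Proof.
move=> q_gt1 lt_mc lt_k; case: (leqP k.+1 q) => le_kq.
  apply: (@leq_ltn_trans (M * (k + h).+1)); last by nia.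
  by rewrite leq_mul2l geq_minl orbT.
apply: (@leq_ltn_trans (M * q)); last by nia.
by rewrite leq_mul2l geq_minr orbT.
Qed.

Fact pseudoderiv_is_linear (F : finFieldType) l : linear (@pseudoderiv F l).
Proof. by move=> a p p'; rewrite /pseudoderiv /hasse linearP modpD modpZl. Qed.

HB.instance Definition _ (F : finFieldType) l :=
  GRing.isLinear.Build F {poly F} {poly F} _ (@pseudoderiv F l)
    (pseudoderiv_is_linear l).

Section Lam.
Variable F : finFieldType.
Local Notation q := #|F|.
Local Notation Lam := (Lam F).
Implicit Types G p : {poly F}.

Lemma pnat_pchar_card : [pchar F].-nat q.
Proof.
have [p _ pF] := finPcharP F.
have := abelem_pgroup (fin_ring_pchar_abelem pF).
by rewrite /pgroup cardsT (eq_pnat _ (pcharf_eq pF)).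
Qed.

Lemma size_Lam : size Lam = q.+1.
Proof.
by rewrite size_polyDl size_polyXn // size_polyN size_polyX ltnS finNzRing_gt1.
Qed.

Lemma Lam_neq0 : Lam != 0.
Proof. by rewrite -size_poly_eq0 size_Lam. Qed.

Lemma horner_modp_Lam p a : (p %% Lam).[a] = p.[a].
Proof.
rewrite [in RHS](divp_eq p Lam) hornerD hornerM.
by rewrite !hornerE expf_card subrr mulr0 add0r.
Qed.

(* Additivity of the Frobenius map, q being a power of the characteristic. *)
Lemma hasse_series_Lam : hasse_series Lam = Lam%:P + Lam^:P.
Proof.
rewrite hasse_seriesE /Lam !rmorphB /= !map_polyXn !map_polyX !hornerE.
have pnat_q : [pchar {poly {poly F}}].-nat q.
  by rewrite !(eq_pnat _ (@pchar_poly _)) pnat_pchar_card.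
rewrite exprDn_pchar // rmorphXn /=; set X := ('X : {poly F})%:P; ring.
Qed.

Lemma size_pseudoderiv_LamX j e l :
  (size (pseudoderiv l (Lam ^+ j * 'X^e)) <= e.+1)%N.
Proof.
rewrite /pseudoderiv /hasse -coef_hasse_series hasse_seriesM hasse_seriesX.
rewrite hasse_series_Lam hasse_seriesXn.
set Y := Lam^:P; set S := \sum_(i < j) (Lam%:P + Y) ^+ (j.-1 - i) * Y ^+ i.
have -> : (Lam%:P + Y) ^+ j = Y ^+ j + Lam%:P * S.
  have := subrXX (Lam%:P + Y) Y j; rewrite addrK -/S => /(canRL (subrK _)) ->.
  by rewrite addrC.
rewrite mulrDl -mulrA coefD coefCM modpD [Lam * _]mulrC modp_mull addr0.
apply: leq_trans (leq_modp _ _) _; rewrite coefM; apply: size_sum_leq => a _.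
rewrite -rmorphXn coef_map /= -hasse_seriesXn coef_hasse_series nderivnXn.
rewrite mul_polyC -scaler_nat !(leq_trans (size_scale_leq _ _)) //.
by rewrite size_polyXn ltnS leq_subr.
Qed.

Lemma Lam_exp_dvdp G M :
  (forall l, (l < M)%N -> forall a, (hasse l G).[a] = 0) -> Lam ^+ M %| G.
Proof.
move=> vanish; rewrite /Lam finField_genPoly -prodrXl.
apply: prod_XsubC_exp_dvdp; first exact: index_enum_uniq.
by move=> a _; apply: XsubC_exp_dvdp => l lt_lM; apply: vanish.
Qed.

Lemma Lam_exp_dvdp_eq0 G M : (size G <= M * q)%N -> Lam ^+ M %| G -> G = 0.
Proof.
move=> sizeG; apply: contraTeq => nzG; apply/negP => /(dvdp_leq nzG).
have : (0 < size (Lam ^+ M))%N by rewrite size_poly_gt0 expf_neq0 ?Lam_neq0.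
move=> /prednK <-; rewrite size_exp size_Lam /=.
by rewrite mulnC ltnNge sizeG.
Qed.

End Lam.

Section Pseudopolynomials.
Variables (F : finFieldType) (k : nat).

Lemma is_pseudopoly_sum I (r : seq I) (P : pred I) (E : I -> {poly F}) :
  (forall i, P i -> is_pseudopoly k (E i)) ->
  is_pseudopoly k (\sum_(i <- r | P i) E i).
Proof.
by move=> psE l; rewrite linear_sum; apply: size_sum_leq => i Pi; apply: psE.
Qed.

Lemma is_pseudopolyZ a (A : {poly F}) :
  is_pseudopoly k A -> is_pseudopoly k (a *: A).
Proof.
by move=> psA l; rewrite linearZ (leq_trans (size_scale_leq _ _)) ?psA.
Qed.

Lemma is_pseudopoly_LamX j e :
  (e <= k)%N -> is_pseudopoly k (Lam F ^+ j * 'X^e).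
Proof.
by move=> le_ek l; rewrite (leq_trans (size_pseudoderiv_LamX _ j e l)).
Qed.

End Pseudopolynomials.

Section LamExpansion.
Variables (F : finFieldType) (m J K : nat).
Local Notation q := #|F|.
Implicit Types (u v : {ffun 'I_m * 'I_J * 'I_K -> F}) (i : 'I_m).

Definition Lam_digit u i (j : 'I_J) : {poly F} :=
  \sum_(e < K) u (i, j, e) *: 'X^e.

Definition Lam_expansion u i : {poly F} :=
  \sum_(j < J) Lam F ^+ j * Lam_digit u i j.

Lemma size_Lam_digit u i j : (size (Lam_digit u i j) <= K)%N.
Proof.
apply: size_sum_leq => e _; apply: leq_trans (size_scale_leq _ _) _.
by rewrite size_polyXn.
Qed.

Lemma coef_Lam_digit u i j (e : 'I_K) : (Lam_digit u i j)`_e = u (i, j, e).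
Proof.
rewrite coef_sum (bigD1 e) //= coefZ coefXn eqxx mulr1 big1 ?addr0 //.
move=> e' ne_e'e.
by rewrite coefZ coefXn val_eqE eq_sym (negPf ne_e'e) mulr0.
Qed.

Lemma Lam_expansionB u v i :
  Lam_expansion (u - v) i = Lam_expansion u i - Lam_expansion v i.
Proof.
rewrite -sumrB; apply: eq_bigr => j _; rewrite -mulrBr -sumrB.
by congr (_ * _); apply: eq_bigr => e _; rewrite !ffunE scalerBl.
Qed.

Lemma is_pseudopoly_Lam_expansion k u i :
  (K <= k.+1)%N -> is_pseudopoly k (Lam_expansion u i).
Proof.
move=> le_Kk; apply: is_pseudopoly_sum => j _; rewrite mulr_sumr.
apply: is_pseudopoly_sum => e _; rewrite -scalerAr.
by apply/is_pseudopolyZ/is_pseudopoly_LamX; rewrite -ltnS (leq_trans _ le_Kk).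
Qed.

Lemma size_Lam_expansion u i :
  (K <= q)%N -> (size (Lam_expansion u i) <= J * q)%N.
Proof.
move=> le_Kq; apply: size_sum_leq => j _.
apply: leq_trans (size_polyMleq _ _) _.
have sizeLj : (size (Lam F ^+ j)).-1 = (q * j)%N by rewrite size_exp size_Lam.
have := size_Lam_digit u i j; have := ltn_ord j.
have : (0 < size (Lam F ^+ j))%N by rewrite size_poly_gt0 expf_neq0 ?Lam_neq0.
nia.
Qed.

Lemma Lam_expansion_neq0 u :
  (K <= q)%N -> u != 0 -> exists i, Lam_expansion u i != 0.
Proof.
move=> le_Kq nz_u.
have [i nz_i | all_eq0] := pickP (fun i => Lam_expansion u i != 0).
  by exists i.
case/eqP: nz_u; apply/ffunP => -[[i j] e].
have /negbFE/eqP Ai_eq0 := all_eq0 i.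
rewrite ffunE -coef_Lam_digit (radix_expansion_eq0 _ Ai_eq0) ?coef0 //.
by move=> j'; rewrite size_Lam ltnS (leq_trans (size_Lam_digit _ _ _)).
Qed.

End LamExpansion.

Definition twisted_by (F : finFieldType) (r : F -> F) (h M : nat) (P : {poly F})
    (U : nat -> {poly F}) : Prop :=
  forall l, (l < M)%N ->
    (size (U l) <= h.+1)%N /\ forall a, (hasse l P).[a] = r a * (U l).[a].

Lemma twisted_pseudopolyP (F : finFieldType) (r : F -> F) h M (P : {poly F}) :
  twisted_pseudopoly r h M P -> exists U, twisted_by r h M P U.
Proof.
move=> twP; have /fin_all_exists[V twV] : forall l : 'I_M, exists V : {poly F},
    (size V <= h.+1)%N /\ forall a, (hasse l P).[a] = r a * V.[a].
  by move=> l; apply: twP.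
exists (fun l => if insub l is Some l' then V l' else 0) => l lt_lM.
by rewrite insubT; apply: twV (Ordinal lt_lM).
Qed.

Section TwistedHasse.
Variables (F : finFieldType) (m h M : nat) (r : F -> F).
Variables (Fs : 'I_m -> {poly F}) (U : 'I_m -> nat -> {poly F}).
Hypothesis twisted_U : forall i, twisted_by r h M (Fs i) (U i).
Implicit Type A : 'I_m -> {poly F}.

Definition twisted_hasse A l : {poly F} :=
  \sum_(i < m) \sum_(j < l.+1) pseudoderiv j (A i) * U i (l - j).

Lemma horner_hasse_sum A l a : (l < M)%N ->
  (hasse l (\sum_(i < m) A i * Fs i)).[a] = r a * (twisted_hasse A l).[a].
Proof.
move=> lt_lM; rewrite /hasse linear_sum /= !horner_sum mulr_sumr.
apply: eq_bigr => i _; rewrite nderivnM !horner_sum mulr_sumr.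
apply: eq_bigr => j _.
have [_ hasse_FsE] := twisted_U i (leq_ltn_trans (leq_subr j l) lt_lM).
by rewrite !hornerM horner_modp_Lam -/(hasse _ _) hasse_FsE mulrCA.
Qed.

Lemma size_twisted_hasse k A l :
  (l < M)%N -> (forall i, is_pseudopoly k (A i)) ->
  (size (twisted_hasse A l) <= (k + h).+1)%N.
Proof.
move=> lt_lM psA; apply: size_sum_leq => i _; apply: size_sum_leq => j _.
apply: leq_trans (size_polyMleq _ _) _.
have [sizeU _] := twisted_U i (leq_ltn_trans (leq_subr j l) lt_lM).
by move: (psA i j) sizeU; move: (size _) (size _) => s s'; lia.
Qed.

Lemma Lam_exp_dvdp_twisted A :
  (forall l, (l < M)%N -> twisted_hasse A l %% Lam F = 0) ->
  Lam F ^+ M %| \sum_(i < m) A i * Fs i.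
Proof.
move=> modp_eq0; apply: Lam_exp_dvdp => l lt_lM a.
by rewrite horner_hasse_sum // -horner_modp_Lam modp_eq0 // horner0 mulr0.
Qed.

End TwistedHasse.

Section Construction.
Variables (F : finFieldType) (m c h M k : nat) (r : F -> F).
Variables (Fs : 'I_m -> {poly F}) (U : 'I_m -> nat -> {poly F}).
Hypothesis twisted_U : forall i, twisted_by r h M (Fs i) (U i).
Hypothesis size_Fs : forall i, (size (Fs i) <= c * #|F|)%N.
Local Notation q := #|F|.
Local Notation J := (M - c)%N.
Local Notation K := (minn k.+1 q).
Local Notation D := (minn (k + h).+1 q).
Implicit Types u v : {ffun 'I_m * 'I_J * 'I_K -> F}.

Definition Lam_constraints u : {ffun 'I_M * 'I_D -> F} :=
  [ffun p : 'I_M * 'I_D =>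
    (twisted_hasse U (Lam_expansion u) p.1 %% Lam F)`_p.2].

Lemma Lam_constraintsB : {morph Lam_constraints : u v / u - v}.
Proof.
move=> u v; apply/ffunP => -[l d]; rewrite !ffunE /=.
have -> : twisted_hasse U (Lam_expansion (u - v)) l =
    twisted_hasse U (Lam_expansion u) l - twisted_hasse U (Lam_expansion v) l.
  rewrite -sumrB; apply: eq_bigr => i _; rewrite -sumrB; apply: eq_bigr => j _.
  by rewrite Lam_expansionB linearB mulrBl.
by rewrite modpD modpN coefB.
Qed.

Lemma size_twisted_hasse_modp u l : (l < M)%N ->
  (size (twisted_hasse U (Lam_expansion u) l %% Lam F)%R <= D)%N.
Proof.
move=> lt_lM; rewrite leq_min; apply/andP; split.
  apply: leq_trans (leq_modp _ _) (size_twisted_hasse twisted_U lt_lM _) => i.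
  exact/is_pseudopoly_Lam_expansion/geq_minl.
by rewrite -ltnS -(size_Lam F) ltn_modp Lam_neq0.
Qed.

Lemma Lam_expansion_sum_eq0 u : (c <= M)%N -> Lam_constraints u = 0 ->
  \sum_(i < m) Lam_expansion u i * Fs i = 0.
Proof.
move=> le_cM u_ker; apply: (Lam_exp_dvdp_eq0 (M := M)).
  apply: size_sum_leq => i _; apply: leq_trans (size_polyMleq _ _) _.
  have := size_Lam_expansion u i (geq_minr _ _); have := size_Fs i.
  have : (J * q + c * q = M * q)%N by rewrite -mulnDl subnK.
  by move: (size _) (size _) => s s'; lia.
apply: (Lam_exp_dvdp_twisted twisted_U) => l lt_lM; apply/polyP => d.
rewrite coef0; have [lt_dD | le_Dd] := ltnP d D.
  by have /ffunP/(_ (Ordinal lt_lM, Ordinal lt_dD)) := u_ker; rewrite !ffunE.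
by rewrite nth_default // (leq_trans (size_twisted_hasse_modp u lt_lM)).
Qed.

End Construction.

Theorem lemma5p6 (F : finFieldType) (m c h M : nat)
  (hm : (0 < m)%N) (hc : (0 < c)%N) (hh : (0 < h)%N) (hM : (0 < M)%N)
  (hcM : (c%:R : rat) < ((m - 1)%:R / m%:R) * M%:R)
  (r : F -> F) (Fs : 'I_m -> {poly F})
  (hdegF : forall i, (size (Fs i) <= c * #|F|)%N)
  (htw : forall i, twisted_pseudopoly r h M (Fs i))
  (k : nat)
  (hk : (k%:R : rat) >
        M%:R / ((m - 1)%:R * M%:R - m%:R * c%:R) * (h + 1)%:R) :
  exists A : 'I_m -> {poly F},
    (forall i, is_pseudopoly k (A i)) /\
    (forall i, (size (A i) <= M * #|F|)%N) /\
    (exists i, A i != 0) /\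
    \sum_(i < m) A i * Fs i = 0.
Proof.
have [lt_mc lt_k] := nat_bounds_of_rat hm hcM hk.
have le_cM : (c <= M)%N by nia.
have /fin_all_exists[U twU] i : exists U, twisted_by r h M (Fs i) U.
  exact: twisted_pseudopolyP.
have [|u nz_u u_ker] :=
  nontrivial_kernel_ffun (@Lam_constraintsB F m c h M k U) (finNzRing_gt1 F).
  by rewrite !card_prod !card_ord unknowns_gt_constraints ?finNzRing_gt1.
exists (Lam_expansion u); split; [|split; [|split]].
- by move=> i; apply/is_pseudopoly_Lam_expansion/geq_minl.
- move=> i; apply: leq_trans (size_Lam_expansion u i (geq_minr _ _)) _.
  by rewrite leq_mul2r leq_subr orbT.
- exact/Lam_expansion_neq0/nz_u/geq_minr.
- exact: Lam_expansion_sum_eq0 twU hdegF u le_cM u_ker.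
Qed.
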